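(* Let $n\ge6$ and $C=(v_0,v_{n-2},v_2)$. Then $|H_n^{(3)}(C)|=\min_{C'}|H_n^{(3)}(C')|$, where $C'$ ranges over all $3$-valid tuples of length $3$ in $\Omega_n$.
   Context: $\Omega_n=\{v_0,\dots,v_{n-1}\}$ with cyclic order $v_0<\dots<v_{n-1}<v_0$, indices mod $n$. For distinct vertices $u,w$, $(u,w)$ is the set of vertices strictly between $u$ and $w$ moving clockwise from $u$ to $w$, and $[u,w]=(u,w)\cup\{u,w\}$. A tuple $(w_1,w_2,w_3)$ of distinct vertices is semi-valid if $w_1<w_3<w_2<w_1$ in clockwise cyclic order, and $3$-valid if moreover $|[w_i,w_{i-1}]|\ge3$ for $i=1,2,3$ (indices mod 3). $H_n^{(3)}(C)=\{e\in\binom{\Omega_n}{3}: e\cap[w_i,w_{i-1}]\neq\emptyset\ \text{for } i=1,2,3\}$. *)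

From mathcomp Require Import all_boot.
Set Implicit Arguments. Unset Strict Implicit. Unset Printing Implicit Defensive.

(* Omega_n = 'I_n, vertex v_k is the ordinal k; clockwise = increasing index mod n.
   Vertices of tuples are given as natural numbers k (meaning v_k), required < n. *)

Definition cdist (n u x : nat) : nat := (x + n - u) %% n.

Definition carc (n u w : nat) : {set 'I_n} :=
  [set x : 'I_n | cdist n u x <= cdist n u w].

(* (w1,w2,w3) semi-valid: distinct vertices with w1 < w3 < w2 < w1 cyclically *)
Definition semivalid (n w1 w2 w3 : nat) : bool :=
  [&& w1 < n, w2 < n, w3 < n, w1 != w2, w2 != w3, w1 != w3 &
      cdist n w1 w3 < cdist n w1 w2].

Definition threevalid (n w1 w2 w3 : nat) : bool :=
  [&& semivalid n w1 w2 w3,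
      3 <= #|carc n w1 w3|, 3 <= #|carc n w2 w1| & 3 <= #|carc n w3 w2|].

Definition H3 (n w1 w2 w3 : nat) : {set {set 'I_n}} :=
  [set e : {set 'I_n} | [&& #|e| == 3,
      e :&: carc n w1 w3 != set0, e :&: carc n w2 w1 != set0 &
      e :&: carc n w3 w2 != set0]].

From mathcomp Require Import all_boot zify.
Set Implicit Arguments. Unset Strict Implicit. Unset Printing Implicit Defensive.

(* For a semi-valid C = (w1,w2,w3) the three closed arcs A1 = [w1,w3],
   A2 = [w2,w1], A3 = [w3,w2] have lengths d1 + 1, d3 + 1, d2 + 1, where
   d1 = cdist w1 w3, d2 = cdist w3 w2, d3 = cdist w2 w1 and d1 + d2 + d3 = n.
   A triple misses A_i iff it lies in the complementary open arc (n - d_i - 1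
   points); it misses A_i and A_j iff it lies in the open gap between them
   (d_k - 1 points, k the third index); nothing misses all three arcs.  By
   inclusion-exclusion, |H(C)| depends only on (d1,d2,d3):
     |H(C)| + sum_i C(n - d_i - 1, 3) = C(n,3) + sum_i C(d_i - 1, 3).
   3-validity means d_i >= 2, and C = (v_0,v_{n-2},v_2) realises (2,2,n-4).
   Writing d_i = x_i + 2, the difference |H(C')| - |H(C)| is the polynomial
   2(xy + yz + zx) + xyz >= 0, which proves minimality. *)

Lemma cdistE n u x : u < n -> x < n ->
  cdist n u x = if u <= x then x - u else x + n - u.
Proof.
move=> hu hx; rewrite /cdist; case: leqP => h.
  have -> : x + n - u = (x - u) + n by lia.
  by rewrite modnDr modn_small //; lia.
by rewrite modn_small //; lia.
Qed.

Lemma cdist_lt n u x : u < n -> cdist n u x < n.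
Proof. by move=> hu; rewrite /cdist ltn_pmod //; lia. Qed.

Lemma count_iota_range lo hi m :
  count (fun k => lo <= k < hi) (iota 0 m) = minn m hi - lo.
Proof.
elim: m => [|m IH]; first by rewrite min0n.
rewrite -addn1 iotaD count_cat IH /= add0n addn0; lia.
Qed.

Lemma card_ord_range n lo hi : hi <= n ->
  #|[set k : 'I_n | lo <= k < hi]| = hi - lo.
Proof.
move=> hn; rewrite cardsE cardE /enum_mem size_filter -enumT.
rewrite -(count_map val (fun k => lo <= k < hi)) val_enum_ord count_iota_range; lia.
Qed.

Ltac case_ifs :=
  repeat match goal with |- context [if ?b then _ else _] => case: (boolP b) => ? end.

Definition cdist_ord n u (hu : u < n) (x : 'I_n) : 'I_n :=
  Ordinal (cdist_lt x hu).

Lemma cdist_ord_inj n u (hu : u < n) : injective (cdist_ord hu).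
Proof.
move=> x y /(congr1 val) /=; rewrite !cdistE // => exy; apply: ord_inj.
by move: exy (ltn_ord x) (ltn_ord y); case_ifs; lia.
Qed.

Lemma card_cdist_range n u lo hi (A : {set 'I_n}) : u < n -> hi <= n ->
  (forall x : 'I_n, (x \in A) = (lo <= cdist n u x < hi)) -> #|A| = hi - lo.
Proof.
move=> hu hhi hA.
have -> : A = cdist_ord hu @^-1: [set k : 'I_n | lo <= k < hi].
  by apply/setP => x; rewrite !inE hA.
by rewrite card_preimset ?card_ord_range //; apply: cdist_ord_inj.
Qed.

Lemma card_carc n u w : u < n -> #|carc n u w| = (cdist n u w).+1.
Proof.
move=> hu; rewrite (@card_cdist_range n u 0 (cdist n u w).+1) ?subn0 //.
  exact: cdist_lt.
by move=> x; rewrite inE ltnS.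
Qed.

Ltac semivalid_lia :=
  rewrite /semivalid => /and5P[? ? ? + /and3P[+ + +]];
  rewrite !cdistE //; case_ifs; lia.

Lemma semivalid_rot n a b c : semivalid n a b c -> semivalid n c a b.
Proof. semivalid_lia. Qed.

Lemma cdist_cycle n a b c : semivalid n a b c ->
  cdist n a c + cdist n c b + cdist n b a = n.
Proof. semivalid_lia. Qed.

Lemma arcs_cover n a b c x : x < n -> semivalid n a b c ->
  [|| cdist n a x <= cdist n a c, cdist n b x <= cdist n b a | cdist n c x <= cdist n c b].
Proof. move=> hx; semivalid_lia. Qed.

Lemma arcs_gap n a b c x : x < n -> semivalid n a b c ->
  (cdist n a c < cdist n a x) && (cdist n b a < cdist n b x)
  = (0 < cdist n c x < cdist n c b).
Proof. move=> hx; semivalid_lia. Qed.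

Section TriplesMeeting.
Variable T : finType.

Definition triples_in (X : {set T}) :=
  [set e : {set T} | e \subset X & #|e| == 3].

Definition triples_meeting (A1 A2 A3 : {set T}) :=
  [set e : {set T} | [&& #|e| == 3, e :&: A1 != set0, e :&: A2 != set0 &
                         e :&: A3 != set0]].

Lemma triples_inI X Y : triples_in X :&: triples_in Y = triples_in (X :&: Y).
Proof. by apply/setP => e; rewrite !inE subsetI andbACA andbb. Qed.

Lemma card_triples_in X : #|triples_in X| = 'C(#|X|, 3).
Proof. exact: cards_draws. Qed.

Lemma triples_meeting_compl A1 A2 A3 :
  triples_meeting A1 A2 A3 =
  [set e : {set T} | #|e| == 3]
    :\: (triples_in (~: A1) :|: triples_in (~: A2) :|: triples_in (~: A3)).
Proof.
apply/setP => e; rewrite !inE !setI_eq0 !disjoints_subset.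
by case: (#|e| == 3); case: (e \subset ~: A1);
   case: (e \subset ~: A2); case: (e \subset ~: A3).
Qed.

(* Inclusion-exclusion over the three complements, written without
   subtraction. *)
Lemma card_triples_meeting A1 A2 A3 :
  #|triples_meeting A1 A2 A3|
  + 'C(#|~: A1|, 3) + 'C(#|~: A2|, 3) + 'C(#|~: A3|, 3)
  + 'C(#|~: A1 :&: ~: A2 :&: ~: A3|, 3)
  = 'C(#|T|, 3) + 'C(#|~: A1 :&: ~: A2|, 3) + 'C(#|~: A1 :&: ~: A3|, 3)
    + 'C(#|~: A2 :&: ~: A3|, 3).
Proof.
set U := triples_in (~: A1) :|: triples_in (~: A2) :|: triples_in (~: A3).
have sub_U : U \subset [set e : {set T} | #|e| == 3].
  by apply/subsetP => e; rewrite !inE; case/orP => [/orP[]|] /andP[].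
have compl_U : #|[set e : {set T} | #|e| == 3] :\: U| + #|U| = 'C(#|T|, 3).
  by rewrite cardsD (setIidPr sub_U) -card_draws subnK // subset_leq_card.
have U3 := cardsUI (triples_in (~: A1) :|: triples_in (~: A2)) (triples_in (~: A3)).
have U2 := cardsUI (triples_in (~: A1)) (triples_in (~: A2)).
rewrite setIUl in U3.
have U13_23 := cardsUI (triples_in (~: A1) :&: triples_in (~: A3))
                       (triples_in (~: A2) :&: triples_in (~: A3)).
rewrite !triples_inI in U3 U2 U13_23.
rewrite setIACA setIid in U13_23.
rewrite triples_meeting_compl -/U !card_triples_in in U3 U2 U13_23 *.
lia.
Qed.

End TriplesMeeting.

Lemma in_carcC n u w (x : 'I_n) : (x \in ~: carc n u w) = (cdist n u w < cdist n u x).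
Proof. by rewrite !inE -ltnNge. Qed.

Lemma card_carcC n u w : u < n -> #|~: carc n u w| = n - (cdist n u w).+1.
Proof. by move=> hu; rewrite cardsCs setCK card_ord card_carc. Qed.

Lemma card_arc_gap n a b c : semivalid n a b c ->
  #|~: carc n a c :&: ~: carc n b a| = cdist n c b - 1.
Proof.
move=> hs; have /and4P[_ _ hc _] := hs.
rewrite (@card_cdist_range n c 1 (cdist n c b)) //; first exact: ltnW (cdist_lt _ hc).
by move=> x; rewrite inE !in_carcC arcs_gap.
Qed.

Lemma arcs_complements_disjoint n a b c : semivalid n a b c ->
  ~: carc n a c :&: ~: carc n b a :&: ~: carc n c b = set0.
Proof.
move=> hs; apply/setP => x; rewrite !inE -!ltnNge.
by move: (arcs_cover (ltn_ord x) hs); lia.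
Qed.

Lemma card_H3 n a b c : semivalid n a b c ->
  #|H3 n a b c| + 'C(n - (cdist n a c).+1, 3) + 'C(n - (cdist n b a).+1, 3)
    + 'C(n - (cdist n c b).+1, 3)
  = 'C(n, 3) + 'C(cdist n c b - 1, 3) + 'C(cdist n b a - 1, 3) + 'C(cdist n a c - 1, 3).
Proof.
move=> hs; have /and4P[ha hb hc _] := hs.
have hs' := semivalid_rot hs; have hs'' := semivalid_rot hs'.
have := card_triples_meeting (carc n a c) (carc n b a) (carc n c b).
rewrite -[triples_meeting _ _ _]/(H3 n a b c) card_ord !card_carcC //.
rewrite arcs_complements_disjoint // cards0 bin0n addn0.
by rewrite card_arc_gap // [~: carc n a c :&: _]setIC card_arc_gap // card_arc_gap.
Qed.

(* 6 C(k+1,3) = (k+1)k(k-1), stated without subtraction; m is a separate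
   argument so that instances keep the exact shape of the binomials used. *)
Lemma binom3_cubic m k : m = k.+1 -> 'C(m, 3) * 6 + m * k = m * k * k.
Proof.
move=> ->; case: k => [|k] //; have := bin_ffact k.+2 3.
rewrite !ffactnS ffactn0 (_ : 3`! = 6) //= muln1.
lia.
Qed.

(* The excess of the arc profile (x+2, y+2, z+2) over (2, 2, x+y+z+2) is
   2(xy + yz + zx) + xyz. *)
Lemma binom3_excess x y z :
  'C(y + z + 3, 3) + 'C(x + z + 3, 3) + 'C(x + y + 3, 3) + 'C(x + y + z + 1, 3)
    + (2 * (x * y + y * z + z * x) + x * y * z)
  = 2 * 'C(x + y + z + 3, 3) + 1 + 'C(x + 1, 3) + 'C(y + 1, 3) + 'C(z + 1, 3).
Proof.
have := @binom3_cubic (y + z + 3) (y + z + 2) (addnS _ _).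
have := @binom3_cubic (x + z + 3) (x + z + 2) (addnS _ _).
have := @binom3_cubic (x + y + 3) (x + y + 2) (addnS _ _).
have := @binom3_cubic (x + y + z + 3) (x + y + z + 2) (addnS _ _).
have := @binom3_cubic (x + y + z + 1) (x + y + z) (addn1 _).
have := @binom3_cubic (x + 1) x (addn1 _).
have := @binom3_cubic (y + 1) y (addn1 _).
have := @binom3_cubic (z + 1) z (addn1 _).
lia.
Qed.

Lemma arc_profile_minimal n d1 d2 d3 :
  2 <= d1 -> 2 <= d2 -> 2 <= d3 -> d1 + d2 + d3 = n ->
  'C(n - d1.+1, 3) + 'C(n - d2.+1, 3) + 'C(n - d3.+1, 3)
    + 'C(n - 4 - 1, 3) + 'C(2 - 1, 3) + 'C(2 - 1, 3)
  <= 'C(n - 2.+1, 3) + 'C(n - 2.+1, 3) + 'C(n - (n - 4).+1, 3)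
    + 'C(d1 - 1, 3) + 'C(d2 - 1, 3) + 'C(d3 - 1, 3).
Proof.
move=> h1 h2 h3 hn; have := binom3_excess (d1 - 2) (d2 - 2) (d3 - 2).
have -> : d2 - 2 + (d3 - 2) + 3 = n - d1.+1 by lia.
have -> : d1 - 2 + (d3 - 2) + 3 = n - d2.+1 by lia.
have -> : d1 - 2 + (d2 - 2) + 3 = n - d3.+1 by lia.
have -> : d1 - 2 + (d2 - 2) + (d3 - 2) + 1 = n - 4 - 1 by lia.
have -> : d1 - 2 + (d2 - 2) + (d3 - 2) + 3 = n - 3 by lia.
have -> : n - (n - 4).+1 = 3 by lia.
have sub2_1 d : 2 <= d -> d - 2 + 1 = d - 1 by lia.
rewrite !sub2_1 // binn (_ : 'C(2 - 1, 3) = 0) //.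
move: (2 * (_ + _ + _) + _) => excess; lia.
Qed.

Theorem lemma3p12 (n : nat) (hn : 6 <= n) :
  threevalid n 0 (n - 2) 2 /\
  forall w1 w2 w3 : 'I_n, threevalid n w1 w2 w3 ->
    #|H3 n 0 (n - 2) 2| <= #|H3 n w1 w2 w3|.
Proof.
have n0 : 0 < n by lia.
have n2 : 2 < n by lia.
have nm2 : n - 2 < n by lia.
have d02 : cdist n 0 2 = 2 by rewrite cdistE.
have d20 : cdist n (n - 2) 0 = 2 by rewrite cdistE //; case_ifs; lia.
have d22 : cdist n 2 (n - 2) = n - 4 by rewrite cdistE //; case_ifs; lia.
have ext_sv : semivalid n 0 (n - 2) 2.
  by rewrite /semivalid d02 cdistE // leq0n subn0; lia.
split.
  by rewrite /threevalid ext_sv !card_carc // d02 d20 d22; lia.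
move=> w1 w2 w3 /and4P[hs len13 len21 len32].
rewrite !card_carc ?ltn_ord // in len13 len21 len32.
have := card_H3 ext_sv; rewrite d02 d20 d22.
have := card_H3 hs.
have := arc_profile_minimal len13 len32 len21 (cdist_cycle hs).
lia.
Qed.
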